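(* Let $a\ge 1$ be an integer and let $S\subseteq\mathbb{F}_2^a$ and $T_a^{(i)}$ be as defined in the context. Then $T_a^{(i)}\cap T_a^{(j)}=\emptyset$ for all $i,j\in S$ with $i\neq j$.
   Context: Elements of $Z_{2^a}=\{0,\dots,2^a-1\}$ are identified with their binary expansions in $\mathbb{F}_2^a$; $\oplus$ is bitwise XOR; for $K\subset Z_{2^a}$, $i\oplus K=\{i\oplus k:k\in K\}$. Let $b=\lfloor\log_2 a\rfloor+1$ (so $2^{b-1}\le a<2^b$) and $m=2^b-a-1$. $T_a$: let $P_a=\{0,2^0,2^1,\dots,2^{a-1}\}$; let $Q_a=\emptyset$ if $a+1$ is a power of 2, and otherwise $Q_a=\{1\oplus 2^{a-m},\dots,1\oplus 2^{a-1}\}$; $T_a=P_a\cup Q_a$, $T_a^{(i)}=i\oplus T_a$. $S$: Let $M_a=\{0<x\le a: x \text{ not a power of } 2\}$, each $x\in M_a$ written $x=\sum_{j=0}^{b-1}x_j2^j$, $x_j\in\{0,1\}$. Define $g(x)=2x$ if $x_{b-1}=0$ and $g(x)=2x+1-2^b$ if $x_{b-1}=1$; let $\tilde M_a=g(M_a)$ and $H_a=\tilde M_a\setminus M_a$. Define $f':\tilde M_a\to M_a$ by $f'(x)=x$ if $x\in M_a\cap\tilde M_a$ and $f'(x)=x+1-2\lceil m/2\rceil$ if $x\in H_a$, and $f=f'\circ g$. Define $h(x)=2^{f(x)-1}+\sum_{j=0}^{b-2}x_j2^{2^{j+1}-1}+x_{b-1}$ for $x\in M_a$, let $M_a'=\{h(x):x\in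 M_a\}\subseteq Z_{2^a}\cong\mathbb{F}_2^a$, and let $S$ be the $\mathbb{F}_2$-linear span of $M_a'$ in $\mathbb{F}_2^a$. *)

From mathcomp Require Import all_boot.
Set Implicit Arguments. Unset Strict Implicit. Unset Printing Implicit Defensive.

(* Elements of Z_{2^a} are naturals < 2^a, identified with their binary
   expansions; bitwise XOR is Nat.lxor. *)
Definition xorn (x y : nat) : nat := Nat.lxor x y.

Definition bitn (x j : nat) : bool := odd (x %/ 2 ^ j).

Definition is_pow2 (x : nat) : bool := has (fun k => x == 2 ^ k) (iota 0 x.+1).

Definition bpar (a : nat) : nat := (trunc_log 2 a).+1.
Definition mpar (a : nat) : nat := 2 ^ bpar a - a - 1.

Definition Pset (a : nat) : seq nat := 0 :: [seq 2 ^ k | k <- iota 0 a].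
Definition Qset (a : nat) : seq nat :=
  if is_pow2 a.+1 then [::]
  else [seq xorn 1 (2 ^ k) | k <- iota (a - mpar a) (mpar a)].
Definition Tset (a : nat) : seq nat := Pset a ++ Qset a.
Definition Tshift (a i : nat) : seq nat := [seq xorn i t | t <- Tset a].

Definition Mset (a : nat) : seq nat :=
  [seq x <- iota 1 a | ~~ is_pow2 x].
Definition gmap (a x : nat) : nat :=
  if bitn x (bpar a).-1 then (2 * x).+1 - 2 ^ bpar a else 2 * x.
Definition Mtilde (a : nat) : seq nat := [seq gmap a x | x <- Mset a].
Definition Hset (a : nat) : seq nat := [seq x <- Mtilde a | x \notin Mset a].
Definition f'map (a x : nat) : nat :=
  if x \in Mset a then x else x + 1 - 2 * uphalf (mpar a).
Definition fmap (a x : nat) : nat := f'map a (gmap a x).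
Definition hmap (a x : nat) : nat :=
  2 ^ (fmap a x - 1)
  + \sum_(0 <= j < (bpar a).-1) bitn x j * 2 ^ (2 ^ j.+1 - 1)
  + bitn x (bpar a).-1.
Definition M'set (a : nat) : seq nat := [seq hmap a x | x <- Mset a].

(* S = F_2-linear span of M_a' in F_2^a: all XOR-sums of finitely many
   elements of M_a' (over F_2 the only coefficients are 0 and 1). *)
Definition inS (a i : nat) : Prop :=
  exists s : seq nat, all (fun v => v \in M'set a) s /\ foldr xorn 0 s = i.

(* Proof idea: a parity-check ("syndrome") argument.  Let sigma be the explicit
   bijection {0,...,a-1} -> {1,...,a} defined below, with sigma(0) = 2^(b-1) and
   sigma(2^(j+1) - 1) = 2^j, and let L : F_2^a -> F_2^b be the F_2-linear map
   sending the basis vector e_p to sigma(p) (in binary), i.e. the XOR of the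
   sigma(p) over the bits p of v.
   1. L vanishes on S.  The exponent f(x) - 1 of the leading term of h(x) is
      sigma^{-1}(x), so h(x) is a sum of powers of two with distinct exponents,
      i.e. their XOR, and L(h(x)) = x XOR (XOR_j x_j 2^j) = x XOR x = 0.
   2. L is injective on T_a: L(0) = 0, L(2^k) = sigma(k) lies in [1, a], and
      L(1 XOR 2^k) = 2^(b-1) + sigma(k) > a for the exponents k used in Q_a.
   3. If i XOR t1 = j XOR t2 with i, j in S and t1, t2 in T_a, applying L gives
      L(t1) = L(t2), hence t1 = t2 and i = j. *)

From Stdlib Require Import PeanoNat.
From HB Require Import structures.
From mathcomp Require Import all_boot zify.

Set Implicit Arguments. Unset Strict Implicit.

Lemma xornA : associative xorn.
Proof. by move=> x y z; rewrite /xorn Nat.lxor_assoc. Qed.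

Lemma xornC : commutative xorn.
Proof. by move=> x y; rewrite /xorn Nat.lxor_comm. Qed.

Lemma xor0n : left_id 0 xorn.
Proof. by move=> x; rewrite /xorn Nat.lxor_0_l. Qed.

HB.instance Definition _ := Monoid.isComLaw.Build nat 0 xorn xornA xornC xor0n.

Lemma xornn x : xorn x x = 0.
Proof. exact: Nat.lxor_nilpotent. Qed.

Lemma xornK y x : xorn (xorn x y) y = x.
Proof. by rewrite -xornA xornn Monoid.mulm1. Qed.

Lemma bitn_testbit x p : bitn x p = Nat.testbit x p.
Proof.
have oddE n : odd n = Nat.odd n.
  by elim: n => [//|n IH]; rewrite Nat.odd_succ -Nat.negb_odd -IH.
elim: p x => [|p IH] x; first by rewrite Nat.bit0_odd /bitn expn0 divn1 oddE.
have div2E : Nat.div2 x = x./2.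
  by have := Nat.div2_odd x; have := odd_double_half x; rewrite oddE; lia.
by rewrite -Nat.testbit_div2 -IH div2E /bitn expnS divnMA divn2.
Qed.

Lemma bitn_inj x y : (forall p, bitn x p = bitn y p) -> x = y.
Proof. by move=> e; apply: Nat.bits_inj => p; rewrite -!bitn_testbit. Qed.

Lemma bitn0 p : bitn 0 p = false.
Proof. by rewrite /bitn div0n. Qed.

Lemma bitn_xor x y p : bitn (xorn x y) p = bitn x p (+) bitn y p.
Proof. by rewrite !bitn_testbit Nat.lxor_spec; case: Nat.testbit; case: Nat.testbit. Qed.

Lemma bitn_small x p : x < 2 ^ p -> bitn x p = false.
Proof. by move=> x_lt; rewrite /bitn divn_small. Qed.

Lemma bitn_pow2 e p : bitn (2 ^ e) p = (e == p).
Proof.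
case: (ltnP e p) => [e_lt|p_le]; last first.
  by rewrite /bitn -expnB // oddX orbF subn_eq0 eqn_leq p_le andbT.
by rewrite bitn_small ?ltn_exp2l //; apply/esym/negbTE; rewrite neq_ltn e_lt.
Qed.

Lemma bitn_scale2 (c : bool) e p : bitn (c * 2 ^ e) p = c && (e == p).
Proof. by case: c; rewrite ?mul1n ?mul0n ?bitn_pow2 ?bitn0. Qed.

Lemma addn_nocarry x y : (forall p, bitn x p && bitn y p = false) -> x + y = xorn x y.
Proof.
move=> disj; apply: Nat.add_nocarry_lxor; apply: Nat.bits_inj_0 => p.
by rewrite Nat.land_spec -!bitn_testbit disj.
Qed.

Lemma bitn_bigxor (I : Type) (r : seq I) (P : pred I) (F : I -> nat) p :
  bitn (\big[xorn/0]_(i <- r | P i) F i) p = \big[addb/false]_(i <- r | P i) bitn (F i) p.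
Proof. exact: (big_morph (bitn^~ p) (fun x y => bitn_xor x y p) (bitn0 p)). Qed.

Lemma sum_distinct_pow2 n (c : nat -> bool) (e : nat -> nat) :
  (forall i j, i < n -> j < n -> e i = e j -> i = j) ->
  \sum_(j < n) c j * 2 ^ e j = \big[xorn/0]_(j < n) (c j * 2 ^ e j).
Proof.
elim: n => [|n IH] e_inj; first by rewrite !big_ord0.
rewrite !big_ord_recr /= IH; last by move=> i j hi hj; apply: e_inj; apply: ltnW.
apply: addn_nocarry => p; rewrite bitn_bigxor bitn_scale2.
case: eqP (c n) => [<-|_] [|]; rewrite ?andbF //= andbT.
rewrite big1 // => j _; rewrite bitn_scale2.
case: eqP => [/e_inj eq_jn|]; rewrite ?andbF //.
by have := ltn_ord j; rewrite (eq_jn (ltnW (ltn_ord j)) (ltnSn n)) ltnn.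
Qed.

Lemma bigxor_bits n x : x < 2 ^ n -> \big[xorn/0]_(j < n) (bitn x j * 2 ^ j) = x.
Proof.
move=> x_lt; apply: bitn_inj => p; rewrite bitn_bigxor.
case: (ltnP p n) => [p_lt|p_ge].
  rewrite (bigD1 (Ordinal p_lt)) //= bitn_scale2 eqxx andbT big1 ?addbF // => j.
  by rewrite -val_eqE bitn_scale2 eq_sym => /negbTE ->; rewrite andbF.
rewrite bitn_small ?big1 // => [j _|]; last by apply: leq_trans x_lt _; rewrite leq_exp2l.
by rewrite bitn_scale2 ltn_eqF ?andbF // (leq_trans (ltn_ord j) p_ge).
Qed.

Section Syndrome.
Variables (n : nat) (sg : nat -> nat).

Definition syndrome (v : nat) : nat :=
  \big[xorn/0]_(p < n) (if bitn v p then sg p else 0).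

Lemma syndrome0 : syndrome 0 = 0.
Proof. by rewrite /syndrome big1 // => p _; rewrite bitn0. Qed.

Lemma syndromeX v w : syndrome (xorn v w) = xorn (syndrome v) (syndrome w).
Proof.
rewrite /syndrome -big_split; apply: eq_bigr => p _ /=; rewrite bitn_xor.
by case: (bitn v p); case: (bitn w p); rewrite /= ?xornn ?xor0n ?Monoid.mulm1.
Qed.

Lemma syndrome_pow2 e : e < n -> syndrome (2 ^ e) = sg e.
Proof.
move=> e_lt; rewrite /syndrome (bigD1 (Ordinal e_lt)) //= bitn_pow2 eqxx.
rewrite big1 ?Monoid.mulm1 // => p; rewrite bitn_pow2 -val_eqE eq_sym /=.
by move=> /negbTE ->.
Qed.

Lemma syndrome_bigxor (I : Type) (r : seq I) (P : pred I) (F : I -> nat) :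
  syndrome (\big[xorn/0]_(i <- r | P i) F i) = \big[xorn/0]_(i <- r | P i) syndrome (F i).
Proof. exact: (big_morph syndrome syndromeX syndrome0). Qed.

End Syndrome.

Definition hibit (a : nat) : nat := 2 ^ trunc_log 2 a.

Definition sigma (a p : nat) : nat :=
  let B := hibit a in let r := a - B in
  if p == 0 then B else if odd p then p.+1./2
  else if p./2 <= r then B + p./2 else a./2 + p./2 - r.

Lemma hibit_bounds a : 1 <= a -> [/\ 1 <= hibit a, hibit a <= a & a < 2 * hibit a].
Proof.
move=> ha; have /andP [lo hi] := trunc_log_bounds (ltnSn 1) ha.
by rewrite /hibit expn_gt0 mulnC -expnSr.
Qed.

Lemma mpar_hibit a : mpar a = 2 * hibit a - a - 1.
Proof. by rewrite /mpar /bpar expnS. Qed.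

Lemma sigma_inj a p q : 1 <= a -> p < a -> q < a -> sigma a p = sigma a q -> p = q.
Proof.
move=> /hibit_bounds [B1 Ba aB] p_lt q_lt; rewrite /sigma.
by repeat case: ifP => ?; lia.
Qed.

Lemma sigma_range a p : 1 <= a -> p < a -> 0 < sigma a p <= a.
Proof.
move=> /hibit_bounds [B1 Ba aB] p_lt; rewrite /sigma.
by repeat case: ifP => ?; lia.
Qed.

Lemma sigma_Qrange a k : 1 <= a -> a - mpar a <= k < a ->
  sigma a k < hibit a /\ a < hibit a + sigma a k.
Proof.
move=> /hibit_bounds [B1 Ba aB]; rewrite mpar_hibit /sigma.
by repeat case: ifP => ?; lia.
Qed.

Lemma sigma_pow2 a j : 1 <= a -> j < trunc_log 2 a ->
  2 ^ j.+1 - 1 < a /\ sigma a (2 ^ j.+1 - 1) = 2 ^ j.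
Proof.
move=> /hibit_bounds [B1 Ba aB] j_lt.
have : 2 ^ j.+1 <= hibit a by rewrite leq_exp2l.
rewrite /sigma expnS; have := expn_gt0 2 j.
by repeat case: ifP => ?; lia.
Qed.

Lemma is_pow2P x : reflect (exists k, x = 2 ^ k) (is_pow2 x).
Proof.
apply: (iffP hasP) => [[k _ /eqP ->]|[k ->]]; first by exists k.
by exists k; rewrite // mem_iota add0n ltnS (ltnW (ltn_expl k (ltnSn 1))).
Qed.

Lemma is_pow2_exp k : is_pow2 (2 ^ k).
Proof. by apply/is_pow2P; exists k. Qed.

Lemma is_pow2_double x : is_pow2 (2 * x) = is_pow2 x.
Proof.
apply/is_pow2P/is_pow2P => [[[|k] e2x]|[k ->]]; last by exists k.+1; rewrite expnS.
  by move: (congr1 odd e2x); rewrite oddM.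
by exists k; move: e2x; rewrite expnS => /eqP; rewrite eqn_mul2l => /eqP.
Qed.

Lemma odd_not_pow2 y : odd y -> 1 < y -> ~~ is_pow2 y.
Proof. by move=> y_odd y_gt1; apply/is_pow2P => -[[|k] e]; move: y_odd y_gt1; rewrite e // oddX. Qed.

Lemma Mset_mem a y : (y \in Mset a) = (0 < y <= a) && ~~ is_pow2 y.
Proof. by rewrite mem_filter mem_iota andbC add1n ltnS. Qed.

Lemma gmapE a x : 1 <= a -> x < 2 * hibit a ->
  gmap a x = if x < hibit a then 2 * x else (2 * x).+1 - 2 * hibit a.
Proof.
move=> ha x_lt; rewrite /gmap /bpar /bitn /= -/(hibit a) expnS.
case: ltnP => [x_small|x_big]; first by rewrite divn_small.
suff -> : x %/ hibit a = 1 by [].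
have [B1 _ _] := hibit_bounds ha.
by apply/eqP; rewrite eqn_leq -ltnS ltn_divLR // leq_divRL //; lia.
Qed.

Lemma gmap_Mset a x : 1 <= a -> x \in Mset a ->
  (gmap a x \in Mset a) = (hibit a <= x) || (2 * x <= a).
Proof.
move=> ha; rewrite Mset_mem => /andP [/andP [x_gt0 x_le] x_npow].
have [B1 Ba aB] := hibit_bounds ha.
rewrite gmapE ?Mset_mem //; last lia.
case: (ltnP x (hibit a)) => [x_small|x_big] /=.
  by rewrite is_pow2_double x_npow andbT; lia.
have x_neB : x != hibit a by apply: contraNneq x_npow => ->; apply: is_pow2_exp.
rewrite odd_not_pow2 /=; lia.
Qed.

Lemma fmap_inv a x : 1 <= a -> x \in Mset a ->
  fmap a x - 1 < a /\ sigma a (fmap a x - 1) = x.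
Proof.
move=> ha x_M; rewrite /fmap /f'map gmap_Mset //.
move: x_M; rewrite Mset_mem => /andP [/andP [x_gt0 x_le] x_npow].
have [B1 Ba aB] := hibit_bounds ha.
have x_neB : x != hibit a by apply: contraNneq x_npow => ->; apply: is_pow2_exp.
rewrite gmapE ?mpar_hibit /sigma //; last lia.
by repeat case: ifP => ?; lia.
Qed.

(* h(x) = sum over j <= b of hcoef j * 2^(hexp j): the indices j < b carry
   the bits x_j, the index b carries the leading term 2^(f(x)-1). *)
Definition hexp (a x j : nat) : nat :=
  let t := trunc_log 2 a in
  if j < t then 2 ^ j.+1 - 1 else if j == t then 0 else fmap a x - 1.

Definition hcoef (a x j : nat) : bool :=
  if j <= trunc_log 2 a then bitn x j else true.

Lemma hmap_sum a x :
  hmap a x = \sum_(j < (trunc_log 2 a).+2) hcoef a x j * 2 ^ hexp a x j.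
Proof.
rewrite /hmap /bpar /= !big_ord_recr /= big_mkord /hcoef /hexp; set t := trunc_log 2 a.
rewrite leqnn ltnn eqxx (gtn_eqF (ltnSn t)) ltnNge leqnSn /= mul1n muln1.
rewrite [RHS]addnC addnA; congr (_ + _ + _); apply: eq_bigr => j _.
by rewrite (ltn_ord j) ltnW.
Qed.

Lemma sigma_hexp a x j : 1 <= a -> x \in Mset a -> j < (trunc_log 2 a).+2 ->
  hexp a x j < a /\ sigma a (hexp a x j) = if j <= trunc_log 2 a then 2 ^ j else x.
Proof.
move=> ha x_M j_lt; rewrite /hexp.
case: (ltngtP j (trunc_log 2 a)) => [j_small|j_big|->].
- exact: sigma_pow2.
- exact: fmap_inv.
- by [].
Qed.

Lemma syndrome_hmap a x : 1 <= a -> x \in Mset a -> syndrome a (sigma a) (hmap a x) = 0.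
Proof.
move=> ha x_M; set t := trunc_log 2 a.
have x_npow : ~~ is_pow2 x by move: x_M; rewrite Mset_mem => /andP [].
have hexp_inj i j : i < t.+2 -> j < t.+2 -> hexp a x i = hexp a x j -> i = j.
  move=> i_lt j_lt /(congr1 (sigma a)).
  rewrite (sigma_hexp ha x_M i_lt).2 (sigma_hexp ha x_M j_lt).2.
  case: ifP => i_le; case: ifP => j_le.
  - by move/eqP; rewrite eqn_exp2l // => /eqP.
  - by move=> ei; case/negP: x_npow; rewrite -ei is_pow2_exp.
  - by move=> ej; case/negP: x_npow; rewrite ej is_pow2_exp.
  - by move=> _; lia.
rewrite hmap_sum (sum_distinct_pow2 _ hexp_inj) syndrome_bigxor.
rewrite (eq_bigr (fun j : 'I_t.+2 => if hcoef a x j then (if j <= t then 2 ^ j else x) else 0));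
  last first.
  move=> j _; have [hexp_lt sigma_e] := sigma_hexp ha x_M (ltn_ord j).
  by case: hcoef; rewrite ?mul0n ?syndrome0 // mul1n syndrome_pow2 // sigma_e.
rewrite big_ord_recr /= /hcoef ltnn.
rewrite (eq_bigr (fun j : 'I_t.+1 => bitn x j * 2 ^ j)) => [|j _]; last first.
  have j_le : j <= trunc_log 2 a := ltn_ord j.
  by rewrite j_le; case: (bitn x j); rewrite ?mul1n.
have x_lt : x < 2 ^ t.+1.
  have [_ _ aB] := hibit_bounds ha; move: x_M; rewrite Mset_mem expnS => /andP [/andP [_ xa] _].
  exact: leq_ltn_trans aB.
by rewrite (bigxor_bits x_lt) xornn.
Qed.

Lemma syndrome_S a v : 1 <= a -> inS a v -> syndrome a (sigma a) v = 0.
Proof.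
move=> ha [s [s_M' <-]]; rewrite foldrE syndrome_bigxor big_seq big1 // => w w_s.
by have /mapP [x x_M ->] := allP s_M' w w_s; apply: syndrome_hmap.
Qed.

Lemma xorn_pow2_small e y : y < 2 ^ e -> xorn (2 ^ e) y = 2 ^ e + y.
Proof.
move=> y_lt; apply/esym/addn_nocarry => p; rewrite bitn_pow2.
by case: eqP => [<-|_]; rewrite ?(bitn_small y_lt).
Qed.

Lemma syndrome_T a t : 1 <= a -> t \in Tset a ->
  [\/ t = 0 /\ syndrome a (sigma a) t = 0,
      exists2 k, k < a & t = 2 ^ k /\ syndrome a (sigma a) t = sigma a k
    | exists2 k, a - mpar a <= k < a &
        t = xorn 1 (2 ^ k) /\ syndrome a (sigma a) t = hibit a + sigma a k].
Proof.
move=> ha; rewrite mem_cat => /orP [].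
  rewrite in_cons => /orP [/eqP ->|/mapP [k]]; first by constructor 1; rewrite syndrome0.
  rewrite mem_iota add0n => /andP [_ k_lt] ->.
  by constructor 2; exists k => //; rewrite syndrome_pow2.
rewrite /Qset; case: ifP => // _ /mapP [k]; rewrite mem_iota => k_range ->.
have [B1 Ba aB] := hibit_bounds ha.
have {}k_range : a - mpar a <= k < a by rewrite mpar_hibit in k_range *; lia.
have [sk_lt _] := sigma_Qrange ha k_range.
constructor 3; exists k => //; split => //.
rewrite -{1}(expn0 2) syndromeX !syndrome_pow2 //; last by case/andP: k_range.
by rewrite /sigma eqxx xorn_pow2_small.
Qed.

Lemma syndrome_inj_T a t1 t2 : 1 <= a -> t1 \in Tset a -> t2 \in Tset a ->
  syndrome a (sigma a) t1 = syndrome a (sigma a) t2 -> t1 = t2.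
Proof.
move=> ha t1_T t2_T.
have sP k : k < a -> 0 < sigma a k <= a := sigma_range ha.
have sQ k : a - mpar a <= k < a -> a < hibit a + sigma a k := fun k_Q => (sigma_Qrange ha k_Q).2.
have kQ k : a - mpar a <= k < a -> k < a by case/andP.
case: (syndrome_T ha t1_T) => [[-> ->]|[k k_a [-> ->]]|[k k_Q [-> ->]]];
case: (syndrome_T ha t2_T) => [[-> ->]|[l l_a [-> ->]]|[l l_Q [-> ->]]] //.
- by have := sP l l_a; lia.
- by have := sQ l l_Q; lia.
- by have := sP k k_a; lia.
- by move/(sigma_inj ha k_a l_a) ->.
- by have := sP k k_a; have := sQ l l_Q; lia.
- by have := sQ k k_Q; lia.
- by have := sQ k k_Q; have := sP l l_a; lia.
- by move/addnI/(sigma_inj ha (kQ k k_Q) (kQ l l_Q)) ->.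
Qed.

Theorem mainTheorem3 (a : nat) (ha : 1 <= a) (i j : nat) :
  inS a i -> inS a j -> i <> j ->
  forall t : nat, t \in Tshift a i -> t \in Tshift a j -> False.
Proof.
move=> i_S j_S neq_ij t /mapP [t1 t1_T ->] /mapP [t2 t2_T eq_t].
have same_syndrome : syndrome a (sigma a) t1 = syndrome a (sigma a) t2.
  move: (congr1 (syndrome a (sigma a)) eq_t).
  by rewrite !syndromeX (syndrome_S ha i_S) (syndrome_S ha j_S) !xor0n.
apply: neq_ij; rewrite -(xornK t1 i) eq_t (syndrome_inj_T ha t1_T t2_T same_syndrome).
by rewrite xornK.
Qed.
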